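(* Let $c\ge1$ and let $G$ be a finite nilpotent group of class $t\ge1$. For $2\le j\le t$ put $Q_j=G/\gamma_j(G)$ and for $1\le j\le t-1$ let $e_j=\min\{\exp(Q_{j+1}),\exp(\gamma_{j+1}(G))\}$. Then $$\exp(M^{(c)}(G))\le\exp(G/G')\prod_{j=1}^{t-1}e_j.$$ In particular, if $G$ is a $p$-group of exponent $p^e$, then $\exp(M^{(c)}(G))\le p^{et}$.
   Context: $\gamma_1(X)=X$, $\gamma_{i+1}(X)=[\gamma_i(X),X]$; $G'=\gamma_2(G)$. The $c$-nilpotent multiplier of $G\cong F/R$ ($F$ free) is $M^{(c)}(G)=(R\cap\gamma_{c+1}(F))/[R,{}_cF]$, where $[R,{}_0F]=R$, $[R,{}_{i+1}F]=[[R,{}_iF],F]$; it is independent of the presentation. $\exp(X)$ is the exponent of $X$. *)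

(* The finite group G is a mathcomp finGroupType group; the
   free group F of a free presentation is an abstract (possibly infinite)
   group, defined below from scratch since MathComp has no infinite groups. *)
From mathcomp Require Import all_boot all_fingroup all_solvable.
Set Implicit Arguments. Unset Strict Implicit. Unset Printing Implicit Defensive.

Record Grp := {
  gcar :> Type;
  gmul : gcar -> gcar -> gcar;
  ginv : gcar -> gcar;
  gone : gcar;
  gmulA : forall x y z, gmul x (gmul y z) = gmul (gmul x y) z;
  gmul1 : forall x, gmul gone x = x;
  gmulV : forall x, gmul (ginv x) x = gone
}.

Definition is_hom (F H : Grp) (f : F -> H) : Prop :=
  forall x y, f (gmul x y) = gmul (f x) (f y).

Definition is_free (F : Grp) : Prop :=
  exists (X : Type) (i : X -> F),
    forall (H : Grp) (f : X -> H),
      exists phi : F -> H,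
        [/\ is_hom phi, (forall x, phi (i x) = f x) &
            forall psi : F -> H, is_hom psi -> (forall x, psi (i x) = f x) ->
              forall y, psi y = phi y].

Section AbstractGroup.
Variable F : Grp.

Fixpoint gpow (x : F) (n : nat) : F :=
  match n with 0 => gone F | n'.+1 => gmul (gpow x n') x end.

Definition gcomm (x y : F) : F := gmul (gmul (ginv x) (ginv y)) (gmul x y).

Inductive gen (S : F -> Prop) : F -> Prop :=
| gen_in x : S x -> gen S x
| gen_one : gen S (gone F)
| gen_mul x y : gen S x -> gen S y -> gen S (gmul x y)
| gen_inv x : gen S x -> gen S (ginv x).

Definition comm_sub (A B : F -> Prop) : F -> Prop :=
  gen (fun z => exists a b, A a /\ B b /\ z = gcomm a b).

Definition fullF : F -> Prop := fun _ => True.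

Fixpoint gamma (i : nat) : F -> Prop :=
  match i with
  | 0 | 1 => fullF
  | i'.+1 => comm_sub (gamma i') fullF
  end.

Fixpoint iter_comm (R : F -> Prop) (k : nat) : F -> Prop :=
  match k with 0 => R | k'.+1 => comm_sub (iter_comm R k') fullF end.

(* exp(A/B) <= m, for B <= A (A/B of finite exponent): some positive
   n <= m kills the quotient A/B. *)
Definition quot_exp_le (A B : F -> Prop) (m : nat) : Prop :=
  exists n, 0 < n <= m /\ forall x, A x -> B (gpow x n).

(* exp(M^(c)(G)) <= m for the presentation F/R, R the kernel. *)
Definition cmult_exp_le (R : F -> Prop) (c m : nat) : Prop :=
  quot_exp_le (fun x => R x /\ gamma c.+1 x) (iter_comm R c) m.

End AbstractGroup.

From mathcomp Require Import all_boot all_fingroup all_solvable.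

(* Write S_j for the preimage in F of 'L_j(G) and e_j for the exponent of
   'L_j(G) / 'L_j.+1(G).  Then [S_j, F] <= S_(j+1) and S_j^(e_j) <= S_(j+1), and
   the key lemma iter_comm_gpow -- if [T, F] <= U and T^k <= U then
   [T, _c F]^k <= [U, _c F] -- applied t times sends gamma_(c+1)(F) = [S_1, _c F]
   into [S_(t+1), _c F] = [R, _c F] after raising to the power e_1 ... e_t.
   The key lemma holds because, modulo [U, _c F], a |-> [a, f_1, ..., f_c] is a
   homomorphism on T and [U, _(c-1) F] is central.  Finally e_1 = exp(G/G'),
   while each e_j divides both exp(G/G') and exp('L_j(G)). *)

Set Implicit Arguments. Unset Strict Implicit. Unset Printing Implicit Defensive.

Section GroupLaws.
Variable F : Grp.
Local Infix "**" := (@gmul F) (at level 40, left associativity).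
Local Notation "1'" := (gone F).

Lemma gmulVr (x : F) : x ** ginv x = 1'.
Proof.
have -> : x ** ginv x = ginv (ginv x) ** ginv x ** (x ** ginv x).
  by rewrite gmulV gmul1.
by rewrite gmulA -(gmulA (ginv (ginv x))) gmulV -gmulA gmul1 gmulV.
Qed.

Lemma gmulr1 (x : F) : x ** 1' = x.
Proof. by rewrite -(gmulV x) gmulA gmulVr gmul1. Qed.

Lemma gmulgKV (u x : F) : u ** ginv x ** x = u.
Proof. by rewrite -gmulA gmulV gmulr1. Qed.

Lemma gmulgK (u x : F) : u ** x ** ginv x = u.
Proof. by rewrite -gmulA gmulVr gmulr1. Qed.

Lemma ginv_unique (x y : F) : x ** y = 1' -> ginv x = y.
Proof. by move=> xy1; rewrite -[ginv x]gmulr1 -xy1 gmulA gmulV gmul1. Qed.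

Lemma ginvK (x : F) : ginv (ginv x) = x.
Proof. by apply: ginv_unique; rewrite gmulV. Qed.

Lemma ginvM (x y : F) : ginv (x ** y) = ginv y ** ginv x.
Proof. by apply: ginv_unique; rewrite !gmulA gmulgK gmulVr. Qed.

Lemma ginv1 : ginv 1' = 1'.
Proof. by apply: ginv_unique; rewrite gmul1. Qed.

Local Ltac gsimpl := rewrite /gcomm ?ginvM ?ginvK ?ginv1 ?gmulA;
  rewrite ?(gmulgKV, gmulgK, gmul1, gmulr1, gmulV, gmulVr).

Lemma gcommMl (x y z : F) :
  gcomm (x ** y) z = gcomm x z ** gcomm (gcomm x z) y ** gcomm y z.
Proof. by gsimpl. Qed.

Lemma gconj_gcomm (a f g : F) :
  ginv g ** gcomm a f ** g = ginv (gcomm a g) ** gcomm a (f ** g).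
Proof. by gsimpl. Qed.

Lemma gcommgC (x y : F) : x ** y = y ** x ** gcomm x y.
Proof. by gsimpl. Qed.

Lemma gcommEl (x y : F) : gcomm x y = ginv x ** (ginv y ** x ** y).
Proof. by gsimpl. Qed.

Lemma gcomm1g (y : F) : gcomm 1' y = 1'.
Proof. by gsimpl. Qed.

End GroupLaws.

Section Subgroups.
Variable F : Grp.
Local Infix "**" := (@gmul F) (at level 40, left associativity).
Local Notation "1'" := (gone F).

Definition subgrp (A : F -> Prop) :=
  [/\ A 1', (forall x y, A x -> A y -> A (x ** y)) & forall x, A x -> A (ginv x)].

Definition normalp (A : F -> Prop) := forall x g, A x -> A (ginv g ** x ** g).

Definition nsg (A : F -> Prop) := subgrp A /\ normalp A.

Lemma gen_subgrp (S : F -> Prop) : subgrp (gen S).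
Proof. by split; [exact: gen_one | exact: gen_mul | exact: gen_inv]. Qed.

Lemma gen_min (S H : F -> Prop) : (forall x, S x -> H x) -> subgrp H ->
  forall x, gen S x -> H x.
Proof.
move=> sSH [H1 HM HV] x; elim=> [y /sSH // | // | y z _ ? _ ? | y _ ?]; auto.
Qed.

Lemma comm_sub_mono (A A' B : F -> Prop) : (forall x, A x -> A' x) ->
  forall x, comm_sub A B x -> comm_sub A' B x.
Proof.
move=> sAA'; apply: gen_min; last exact: gen_subgrp.
by move=> _ [a [b [Aa [Bb ->]]]]; apply: gen_in; exists a, b; auto.
Qed.

Lemma comm_sub_normal (A : F -> Prop) : normalp (comm_sub A (@fullF F)).
Proof.
move=> x g; elim=> [_ [a [b [Aa [_ ->]]]] | | y z _ Hy _ Hz | y _ Hy].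
- rewrite gconj_gcomm; apply: gen_mul.
    by apply: gen_inv; apply: gen_in; exists a, g.
  by apply: gen_in; exists a, (b ** g).
- by rewrite gmulr1 gmulV; apply: gen_one.
- have -> : ginv g ** (y ** z) ** g = (ginv g ** y ** g) ** (ginv g ** z ** g).
    by rewrite !gmulA gmulgK.
  exact: gen_mul.
- have -> : ginv g ** ginv y ** g = ginv (ginv g ** y ** g).
    by rewrite !ginvM ginvK !gmulA.
  exact: gen_inv.
Qed.

Lemma gpowSl (x : F) n : gpow x n.+1 = x ** gpow x n.
Proof.
elim: n => [|n IHn]; first by rewrite /= gmul1 gmulr1.
by change (gpow x n.+1 ** x = x ** (gpow x n ** x)); rewrite IHn gmulA.
Qed.

Lemma gpow1 (x : F) : gpow x 1 = x.
Proof. exact: gmul1. Qed.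

Lemma gpow1g n : gpow 1' n = 1'.
Proof. by elim: n => //= n ->; rewrite gmul1. Qed.

Lemma gpowV (x : F) n : gpow (ginv x) n = ginv (gpow x n).
Proof.
elim: n => [|n IHn]; first by rewrite /= ginv1.
by rewrite gpowSl ginvM -IHn.
Qed.

Lemma gpowD (x : F) a b : gpow x (a + b) = gpow x a ** gpow x b.
Proof. by elim: b => [|b IHb]; rewrite ?addn0 ?gmulr1 // addnS /= IHb gmulA. Qed.

Lemma gpowM (x : F) a b : gpow x (a * b) = gpow (gpow x a) b.
Proof. by elim: b => [|b IHb]; rewrite ?muln0 // mulnS addnC gpowD IHb. Qed.

Lemma subgrp_gpow (A : F -> Prop) (x : F) n : subgrp A -> A x -> A (gpow x n).
Proof. by case=> A1 AM _ Ax; elim: n => //= n IHn; apply: AM. Qed.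

End Subgroups.

Section IteratedCommutators.
Variable F : Grp.
Local Infix "**" := (@gmul F) (at level 40, left associativity).
Local Notation "1'" := (gone F).

Fixpoint lcomm (x : F) (fs : seq F) : F :=
  if fs is f :: fs' then lcomm (gcomm x f) fs' else x.

Lemma lcomm1g fs : lcomm 1' fs = 1'.
Proof. by elim: fs => //= f fs IHfs; rewrite gcomm1g. Qed.

Lemma iter_comm_mono (A B : F -> Prop) n : (forall x, A x -> B x) ->
  forall x, iter_comm A n x -> iter_comm B n x.
Proof.
by move=> sAB; elim: n => [|n IHn] x; [exact: sAB | exact: comm_sub_mono].
Qed.

Lemma iter_comm_shift (T U : F -> Prop) : (forall x, comm_sub T (@fullF F) x -> U x) ->
  forall n x, iter_comm T n.+1 x -> iter_comm U n x.
Proof.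
by move=> sTU; elim=> [|n IHn] x; [exact: sTU | exact: comm_sub_mono].
Qed.

Lemma gamma_iter_comm n x : gamma n.+1 x -> iter_comm (@fullF F) n x.
Proof. by elim: n x => [|n IHn] x //; exact: comm_sub_mono. Qed.

Lemma iter_comm_lcomm (U : F -> Prop) r x fs :
  iter_comm U r x -> iter_comm U (r + size fs) (lcomm x fs).
Proof.
elim: fs r x => [|f fs IHfs] r x /=; first by rewrite addn0.
by move=> Ux; rewrite -addSnnS; apply: IHfs; apply: gen_in; exists x, f.
Qed.

Section NormalSubgroup.
Variable U : F -> Prop.
Hypothesis nsgU : nsg U.

Lemma iter_comm_subgrp n : subgrp (iter_comm U n).
Proof. by case: n => [|n]; [case: nsgU | exact: gen_subgrp]. Qed.

Lemma iter_comm_nsg n : nsg (iter_comm U n).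
Proof.
split; first exact: iter_comm_subgrp.
by case: n => [|n]; [case: nsgU | exact: comm_sub_normal].
Qed.

Lemma iter_comm_S n x : iter_comm U n.+1 x -> iter_comm U n x.
Proof.
elim: n x => [|n IHn] x; last exact: comm_sub_mono.
apply: gen_min; last by case: nsgU.
move=> _ [a [b [Ua [_ ->]]]]; rewrite gcommEl.
by case: nsgU => [[_ UM UV] UN]; apply: UM; [exact: UV | exact: UN].
Qed.

Lemma iter_comm_leq m n x : m <= n -> iter_comm U n x -> iter_comm U m x.
Proof.
move=> le_mn; rewrite -(subnKC le_mn); elim: (n - m) x => [|d IHd] x.
  by rewrite addn0.
by rewrite addnS => /iter_comm_S /IHd.
Qed.

End NormalSubgroup.
End IteratedCommutators.

Section Congruence.
Variable F : Grp.
Local Infix "**" := (@gmul F) (at level 40, left associativity).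
Local Notation "1'" := (gone F).
Variable K : F -> Prop.
Hypothesis nsgK : nsg K.

Definition eqmod (x y : F) := K (ginv x ** y).

Let KM x y : K x -> K y -> K (x ** y).
Proof. by case: nsgK => [[_ KM _] _]; apply: KM. Qed.
Let KV x : K x -> K (ginv x). Proof. by case: nsgK => [[_ _ KV] _]; apply: KV. Qed.
Let KJ x g : K x -> K (ginv g ** x ** g). Proof. by case: nsgK => _; apply. Qed.

Lemma eqmod_refl x : eqmod x x.
Proof. by rewrite /eqmod gmulV; case: nsgK => [[]]. Qed.

Lemma eqmod_sym x y : eqmod x y -> eqmod y x.
Proof. by move=> /KV; rewrite /eqmod ginvM ginvK. Qed.

Lemma eqmod_trans x y z : eqmod x y -> eqmod y z -> eqmod x z.
Proof. by move=> Exy Eyz; move: (KM Exy Eyz); rewrite /eqmod !gmulA gmulgK. Qed.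

Lemma eqmod_mulr x x' v : eqmod x x' -> eqmod (x ** v) (x' ** v).
Proof. by move=> /(KJ v); rewrite /eqmod ginvM !gmulA. Qed.

Lemma eqmod_dropl u v w : K w -> eqmod (u ** w ** v) (u ** v).
Proof.
move=> Kw; rewrite /eqmod !ginvM !gmulA gmulgKV.
by move: (KJ v (KV Kw)); rewrite -!gmulA.
Qed.

Lemma eqmod_mem x y : eqmod x y -> K x -> K y.
Proof. by move=> Exy Kx; move: (KM Kx Exy); rewrite gmulA gmulVr gmul1. Qed.

Lemma gcomm_mem w f : K w -> K (gcomm w f).
Proof. by move=> Kw; rewrite gcommEl; apply: KM (KV Kw) (KJ f Kw). Qed.

Lemma eqmod_gpowM (Z : F -> Prop) : subgrp Z -> (forall z f, Z z -> K (gcomm z f)) ->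
  forall y z k, Z z -> eqmod (gpow (y ** z) k) (gpow y k ** gpow z k).
Proof.
move=> sZ cZK y z k Zz; elim: k => [|k IHk].
  by rewrite /= gmulr1; exact: eqmod_refl.
change (eqmod (gpow (y ** z) k ** (y ** z)) (gpow y k ** y ** (gpow z k ** z))).
apply: eqmod_trans (eqmod_mulr _ IHk) _.
have -> : gpow y k ** gpow z k ** (y ** z) =
          gpow y k ** y ** gpow z k ** gcomm (gpow z k) y ** z.
  by rewrite (gmulA _ y z) -(gmulA _ _ y) (gcommgC (gpow z k) y) !gmulA.
rewrite (gmulA _ (gpow z k)); apply: eqmod_dropl.
by apply: cZK; apply: subgrp_gpow.
Qed.

Lemma eqmod_gpow_mem x y k : eqmod x y -> K (gpow y k) -> K (gpow x k).
Proof.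
move=> /eqmod_sym Eyx Kyk.
have sK : subgrp K by case: nsgK.
have -> : x = y ** (ginv y ** x) by rewrite gmulA gmulVr gmul1.
apply: eqmod_mem (eqmod_sym (eqmod_gpowM sK (@gcomm_mem) y k Eyx)) _.
by apply: KM Kyk _; apply: subgrp_gpow.
Qed.

Definition lcomm_hom (A : F -> Prop) (fs : seq F) :=
  forall a a', A a -> A a' -> eqmod (lcomm (a ** a') fs) (lcomm a fs ** lcomm a' fs).

Lemma lcomm_hom_gpow A fs a j : subgrp A -> lcomm_hom A fs -> A a ->
  eqmod (lcomm (gpow a j) fs) (gpow (lcomm a fs) j).
Proof.
move=> sA homA Aa; elim: j => [|j IHj]; first by rewrite /= lcomm1g; exact: eqmod_refl.
apply: eqmod_trans (homA _ _ (subgrp_gpow j sA Aa) Aa) _.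
exact: eqmod_mulr.
Qed.

Lemma lcomm_hom_invg A fs a : subgrp A -> lcomm_hom A fs -> A a ->
  eqmod (lcomm (ginv a) fs) (ginv (lcomm a fs)).
Proof.
case=> _ _ AV homA Aa; move: (homA _ _ Aa (AV _ Aa)).
by rewrite gmulVr lcomm1g /eqmod ginv1 gmul1 => /KV; rewrite ginvM.
Qed.

End Congruence.

Section IteratedCommutatorExponent.
Variable F : Grp.
Local Infix "**" := (@gmul F) (at level 40, left associativity).
Variables (U T : F -> Prop) (c k : nat).
Hypotheses (nsgU : nsg U) (sT : subgrp T) (c_gt0 : 0 < c)
  (sTFU : forall x, comm_sub T (@fullF F) x -> U x)
  (expTU : forall s, T s -> U (gpow s k)).

Local Notation K := (iter_comm U c).
Local Notation nsgK := (iter_comm_nsg nsgU c).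
Let KM x y : K x -> K y -> K (x ** y).
Proof. by case: (iter_comm_subgrp nsgU c) => _ KM _; apply: KM. Qed.

Lemma gcomm_iter_comm_pred_mem w f : iter_comm U c.-1 w -> K (gcomm w f).
Proof. by move=> Uw; rewrite -(prednK c_gt0); apply: gen_in; exists w, f. Qed.

Lemma lcomm_hom_mul_drop q fs x e y : c <= q.+1 + size fs ->
  lcomm_hom K (iter_comm U q) fs ->
  iter_comm U q x -> iter_comm U q.+1 e -> iter_comm U q y ->
  eqmod K (lcomm (x ** e ** y) fs) (lcomm x fs ** lcomm y fs).
Proof.
move=> le_c homq Ux Ue Uy; have Ue' := iter_comm_S nsgU Ue.
have [_ UM _] := iter_comm_subgrp nsgU q.
have Ke : K (lcomm e fs) := iter_comm_leq nsgU le_c (iter_comm_lcomm fs Ue).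
have Exey := homq _ _ (UM _ _ Ux Ue') Uy.
have Exe := homq _ _ Ux Ue'.
have Ee := eqmod_dropl nsgK (lcomm x fs) (gone F) Ke; rewrite !gmulr1 in Ee.
exact: (eqmod_trans nsgK Exey (eqmod_mulr nsgK (lcomm y fs) (eqmod_trans nsgK Exe Ee))).
Qed.

Lemma lcomm_hom_cons A q f fs : c <= q.+1 + size fs ->
  lcomm_hom K (iter_comm U q) fs ->
  (forall a, A a -> iter_comm U q (gcomm a f)) -> lcomm_hom K A (f :: fs).
Proof.
move=> le_c homq sAU a a' Aa Aa'; rewrite /= gcommMl.
apply: (lcomm_hom_mul_drop le_c homq (sAU a Aa) _ (sAU a' Aa')).
by apply: gen_in; exists (gcomm a f), a'; split; first exact: sAU.
Qed.

Lemma lcomm_hom_iter_comm p fs : c <= p.+1 + size fs ->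
  lcomm_hom K (iter_comm U p) fs.
Proof.
elim: fs p => [|f fs IHfs] p le_c; first by move=> a a' _ _; exact: (eqmod_refl nsgK).
rewrite /= addnS -addSn in le_c.
apply: (lcomm_hom_cons le_c (IHfs _ le_c)) => a Ua.
by apply: gen_in; exists a, f.
Qed.

Lemma lcomm_hom_T fs : size fs = c -> lcomm_hom K T fs.
Proof.
case: fs => [|f fs] /= size_fs; first by move: c_gt0; rewrite -size_fs.
have le_c : c <= 1 + size fs by rewrite -size_fs.
apply: (lcomm_hom_cons le_c (lcomm_hom_iter_comm le_c)) => a Ta.
by apply: sTFU; apply: gen_in; exists a, f.
Qed.

Lemma lcomm_gpow_T a fs : T a -> size fs = c -> K (gpow (lcomm a fs) k).
Proof.
move=> Ta size_fs.
apply: (eqmod_mem nsgK (lcomm_hom_gpow nsgK k sT (lcomm_hom_T size_fs) Ta)).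
by rewrite -size_fs; apply: (iter_comm_lcomm fs (expTU Ta : iter_comm U 0 _)).
Qed.

Lemma lcomm_gpow_mulg i fs x y : size fs + i.+1 = c ->
  iter_comm U i x -> iter_comm U i y ->
  K (gpow (lcomm x fs) k) -> K (gpow (lcomm y fs) k) -> K (gpow (lcomm (x ** y) fs) k).
Proof.
move=> size_fs Ux Uy Kx Ky.
have le_c : c <= i.+1 + size fs by rewrite -size_fs addnC.
apply: (eqmod_gpow_mem nsgK (lcomm_hom_iter_comm le_c Ux Uy)).
have Zy : iter_comm U c.-1 (lcomm y fs).
  by rewrite -size_fs addnS addnC; apply: iter_comm_lcomm.
have Exy := eqmod_gpowM nsgK (iter_comm_subgrp nsgU c.-1)
  gcomm_iter_comm_pred_mem (lcomm x fs) k Zy.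
exact: (eqmod_mem nsgK (eqmod_sym nsgK Exy) (KM Kx Ky)).
Qed.

Lemma lcomm_gpow_invg i fs x : size fs + i.+1 = c ->
  iter_comm U i x -> K (gpow (lcomm x fs) k) -> K (gpow (lcomm (ginv x) fs) k).
Proof.
move=> size_fs Ux Kx.
have le_c : c <= i.+1 + size fs by rewrite -size_fs addnC.
apply: (eqmod_gpow_mem nsgK
  (lcomm_hom_invg nsgK (iter_comm_subgrp nsgU i) (lcomm_hom_iter_comm le_c) Ux)).
by rewrite gpowV; case: (iter_comm_subgrp nsgU c) => _ _; apply.
Qed.

Lemma lcomm_gpow_iter_comm i a fs : iter_comm T i a -> size fs + i = c ->
  K (gpow (lcomm a fs) k).
Proof.
elim: i a fs => [|i IHi] a fs; first by rewrite addn0; exact: lcomm_gpow_T.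
move=> Ta size_fs.
elim: Ta => [_ [b [f [Tb [_ ->]]]] | | x y Tx IHx Ty IHy | x Tx IHx].
- by apply: (IHi b (f :: fs) Tb); rewrite /= addSnnS.
- by rewrite lcomm1g gpow1g; case: (iter_comm_subgrp nsgU c).
- exact: (lcomm_gpow_mulg size_fs
    (iter_comm_shift sTFU Tx) (iter_comm_shift sTFU Ty) IHx IHy).
- exact: (lcomm_gpow_invg size_fs (iter_comm_shift sTFU Tx) IHx).
Qed.

Lemma iter_comm_gpow y : iter_comm T c y -> iter_comm U c (gpow y k).
Proof. by move=> Ty; apply: (lcomm_gpow_iter_comm (fs := [::]) Ty). Qed.

End IteratedCommutatorExponent.

Notation lcn_exp G j := (exponent ('L_j(G) / 'L_j.+1(G))).

Section LowerCentralExponents.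
Local Open Scope group_scope.
Variables (gT : finGroupType) (G : {group gT}).

Lemma exponent_quotientP (H : {group gT}) (A : {set gT}) n : A \subset 'N(H) ->
  reflect (forall x, x \in A -> x ^+ n \in H) (exponent (A / H) %| n).
Proof.
move=> nHA; apply: (iffP exponentP) => [expAH x Ax | expAH _ /morphimP[x Nx Ax ->]].
  have Nx := subsetP nHA x Ax.
  by apply: coset_idr; rewrite ?groupX // morphX // expAH // mem_morphim.
by rewrite -morphX //; apply: coset_id; apply: expAH.
Qed.

(* Modulo L_(j+3), commutation L_(j+1) x G -> L_(j+2) is bilinear with central,
   hence abelian, image. *)
Lemma exponent_lcn_factor j : lcn_exp G j.+1 %| exponent (G / 'L_2(G)).
Proof.
set m := exponent (G / 'L_2(G)); elim: j => [|j IHj] //.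
set N := 'L_j.+3(G).
have nLL n n' : 'L_n(G) \subset 'N('L_n'(G)).
  exact: subset_trans (lcn_sub n G) (lcn_norm n' G).
have cLG : 'L_j.+2(G) / N \subset 'Z(G / N) by apply: lcn_central.
have defL : 'L_j.+2(G) / N = <<commg_set ('L_j.+1(G) / N) (G / N)>>.
  by rewrite lcnSn quotientR ?nLL ?lcn_norm.
have sCZ : commg_set ('L_j.+1(G) / N) (G / N) \subset 'Z(G / N).
  by rewrite (subset_trans _ cLG) // defL subset_gen.
rewrite defL abelian_exponent_gen; last exact: abelianS sCZ (center_abelian _).
apply/exponentP=> _ /imset2P[_ vb /morphimP[u Nu Lu ->] Gvb ->].
have Gu := subsetP (lcn_sub j.+1 G) u Lu.
rewrite -commXg; last first.
  apply: (centerC (A := G / N)); first exact: mem_morphim.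
  by apply: (subsetP sCZ); apply: imset2_f => //; exact: mem_morphim.
have : [~ coset N (u ^+ m), vb] \in 'L_j.+3(G) / N.
  rewrite lcnSn quotientR ?nLL ?lcn_norm // mem_commg ?mem_quotient //.
  by move/(exponent_quotientP _ (nLL j.+1 j.+2)): IHj; apply.
by rewrite morphX // trivg_quotient => /set1P.
Qed.

Lemma exponent_abelianization_dvdn n : 1 < n ->
  exponent (G / 'L_2(G)) %| exponent (G / 'L_n(G)).
Proof.
move=> n_gt1; apply/(exponent_quotientP _ (lcn_norm 2 G)) => x Gx.
apply: (subsetP (lcn_sub_leq G n_gt1)).
by apply/(exponent_quotientP _ (lcn_norm n G)).
Qed.

End LowerCentralExponents.

Section LowerCentralProducts.
Variables (gT : finGroupType) (G : {group gT}).

Lemma prod_lcn_exp_le t : 0 < t ->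
  \prod_(1 <= j < t.+1) lcn_exp G j <=
  exponent (G / 'L_2(G)) *
    \prod_(1 <= j < t) minn (exponent (G / 'L_j.+1(G))) (exponent 'L_j.+1(G)).
Proof.
move=> t_gt0; rewrite big_nat_recl // lcn1 leq_mul2l; apply/orP; right.
rewrite big_nat_cond [X in _ <= X]big_nat_cond.
apply: leq_prod => j /andP[/andP[j_gt0 _] _].
rewrite leq_min !(dvdn_leq (exponent_gt0 _)) ?exponent_quotient ?andbT //.
exact: dvdn_trans (exponent_lcn_factor G j) (exponent_abelianization_dvdn G _).
Qed.

Lemma prod_lcn_exp_le_expn t : \prod_(1 <= j < t.+1) lcn_exp G j <= exponent G ^ t.
Proof.
rewrite -[t in _ ^ t](subn1 t.+1) -prod_nat_const_nat; apply: leq_prod => j _.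
apply: dvdn_leq (exponent_gt0 _) _; apply: dvdn_trans (exponent_quotient _ _) _.
exact/exponentS/lcn_sub.
Qed.

End LowerCentralProducts.

Section Presentation.
Variables (gT : finGroupType) (G : {group gT}) (F : Grp) (pi : F -> gT).
Hypotheses (piM : forall x y, pi (gmul x y) = (pi x * pi y)%g)
  (piG : forall x, pi x \in G).

Lemma pi1 : pi (gone F) = 1%g.
Proof. by apply: (@mulIg _ (pi (gone F))); rewrite mul1g -piM gmul1. Qed.

Lemma piV x : pi (ginv x) = (pi x)^-1%g.
Proof. by apply: (@mulIg _ (pi x)); rewrite -piM gmulV pi1 mulVg. Qed.

Lemma piR x y : pi (gcomm x y) = [~ pi x, pi y]%g.
Proof. by rewrite /gcomm !piM !piV /commg /conjg !mulgA. Qed.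

Lemma piX x n : pi (gpow x n) = (pi x ^+ n)%g.
Proof. by elim: n => [|n IHn] /=; rewrite ?pi1 // piM IHn expgSr. Qed.

Definition lcn_preim j : F -> Prop := fun x => pi x \in ('L_j(G))%g.

Lemma lcn_preim_nsg j : nsg (lcn_preim j).
Proof.
rewrite /lcn_preim; split; first split.
- by rewrite pi1 group1.
- by move=> x y; rewrite piM; apply: groupM.
- by move=> x; rewrite piV groupV.
move=> x g; rewrite !piM piV -mulgA -conjgE => Lx.
by rewrite memJ_norm // (subsetP (lcn_norm j G)).
Qed.

Lemma comm_sub_lcn_preim j x :
  comm_sub (lcn_preim j) (@fullF F) x -> lcn_preim j.+1 x.
Proof.
apply: gen_min; last by case: (lcn_preim_nsg j.+1).
move=> _ [a [b [La [_ ->]]]]; rewrite /lcn_preim piR.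
by apply: (subsetP (lcnSnS j G)); apply: mem_commg.
Qed.

Lemma lcn_preim_gpow j s : lcn_preim j s ->
  lcn_preim j.+1 (gpow s (lcn_exp G j)).
Proof.
rewrite /lcn_preim piX; move: (pi s); apply/exponent_quotientP => //.
exact: subset_trans (lcn_sub j G) (lcn_norm j.+1 G).
Qed.

Lemma gamma_gpow_lcn_preim c n x : 0 < c -> gamma c.+1 x ->
  iter_comm (lcn_preim n.+1) c
    (gpow x (\prod_(1 <= j < n.+1) lcn_exp G j)).
Proof.
move=> c_gt0 Gx; elim: n => [|n IHn].
  rewrite big_geq // gpow1; apply: iter_comm_mono (gamma_iter_comm Gx) => y _.
  exact: piG.
rewrite big_nat_recr //= gpowM.
have [sL _] := lcn_preim_nsg n.+1.
exact: (iter_comm_gpow (lcn_preim_nsg _) sL c_gt0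
  (@comm_sub_lcn_preim _) (@lcn_preim_gpow _) IHn).
Qed.

End Presentation.

Lemma cmult_exp_le_gpow (F : Grp) (R : F -> Prop) c n m : 0 < n <= m ->
  (forall x, gamma c.+1 x -> iter_comm R c (gpow x n)) -> cmult_exp_le R c m.
Proof. by move=> n_bound Rn; exists n; split => // x [_]; apply: Rn. Qed.

Theorem corollary27 (gT : finGroupType) (G : {group gT}) (c t : nat)
  (hc : 1 <= c) (hnil : nilpotent G) (ht : nil_class G = t) (ht1 : 1 <= t)
  (F : Grp) (hF : is_free F) (pi : F -> gT)
  (hpi : forall x y, pi (gmul x y) = (pi x * pi y)%g)
  (hin : forall x, pi x \in G)
  (hsurj : forall g, g \in G -> exists x, pi x = g) :
  let R := fun x : F => pi x = 1%g in
  cmult_exp_le R c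
    (exponent (G / 'L_2(G)) *
     \prod_(1 <= j < t) minn (exponent (G / 'L_j.+1(G))) (exponent 'L_j.+1(G)))
  /\ (forall p e : nat, prime p -> (p.-group G)%g -> exponent G = p ^ e ->
        cmult_exp_le R c (p ^ (e * t))).
Proof.
move=> R; set n := \prod_(1 <= j < t.+1) lcn_exp G j.
have n_gt0 : 0 < n by apply: prodn_gt0 => j; apply: exponent_gt0.
have Rn x : gamma c.+1 x -> iter_comm R c (gpow x n).
  move=> /(gamma_gpow_lcn_preim hpi hin t hc); apply: iter_comm_mono => y.
  by rewrite /lcn_preim (lcn_nil_classP t hnil _) ?ht // => /set1P.
split; first by apply: cmult_exp_le_gpow Rn; rewrite n_gt0 prod_lcn_exp_le.
move=> p e _ _ expG; apply: cmult_exp_le_gpow Rn.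
by rewrite n_gt0 expnM -expG prod_lcn_exp_le_expn.
Qed.
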